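(* Assume $d\ge1$ and let $\lambda\in\mathbb R$. Let $\bar u^*_0,\dots,\bar u^*_d$ be an ordering of $u^*_0,\dots,u^*_d$. Then the matrix representing $(L^*+\lambda)^2$ with respect to the ordered basis $\bar u^*_0,\dots,\bar u^*_d$ is irreducible tridiagonal if and only if one of the following holds: (i) $2\lambda+a^*_{d-1}+a^*_d\neq0$, $2\lambda+a^*_i+a^*_{i+1}=0$ for all $0\le i\le d-2$, and either $\bar u^*_i=u^*_{2i}$ for $0\le i\le\lfloor d/2\rfloor$ and $\bar u^*_i=u^*_{2(d-i)+1}$ for $\lfloor d/2\rfloor+1\le i\le d$; or $\bar u^*_i=u^*_{2i+1}$ for $0\le i\le\lceil d/2\rceil-1$ and $\bar u^*_i=u^*_{2(d-i)}$ for $\lceil d/2\rceil\le i\le d$. (ii) $2\lambda+a^*_0+a^*_1\neq0$, $2\lambda+a^*_i+a^*_{i+1}=0$ for all $1\le i\le d-1$, and either $\bar u^*_i=u^*_{d-2i}$ for $0\le i\le\lfloor d/2\rfloor$ and $\bar u^*_i=u^*_{2i-d-1}$ for $\lfloor d/2\rfloor+1\le i\le d$; or $\bar u^*_i=u^*_{d-2i-1}$ for $0\le i\le\lceil d/2\rceil-1$ and $\bar u^*_i=u^*_{2i-d}$ for $\lceil d/2\rceil\le i\le d$.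
   Context: Fix an integer $d\ge0$ and $r,s\in(-1,\infty)$. Write $(x)_i=x(x+1)\cdots(x+i-1)$, $(x)_0=1$. For $0\le i\le d$ put $\theta_i=(d-i)(d-i+r+s+1)$ (distinct) and $\theta^*_i=i$. Put $b^*_i=\frac{(d-i)(i-d-s)(2d-2i+r+s+2)_i}{(2d-2i+r+s)_{i+1}}$ ($0\le i\le d-1$), $c^*_i=\frac{i(i-d-r-1)(d-i+r+s+1)_{d-i}}{(d-i+r+s+2)_{d-i+1}}$ ($1\le i\le d$), $b^*_d=c^*_0=0$, $a^*_i=\theta^*_0-b^*_i-c^*_i$, $k^*_i=\frac{b^*_0\cdots b^*_{i-1}}{c^*_1\cdots c^*_i}$ ($0\le i\le d$). Put $c_i=i(i+r)$ and $\nu=\frac{\prod_{j=1}^d(\theta_0-\theta_j)}{c_1\cdots c_d}$. Let $\mathcal P_d(\mathbb R)$ be the real polynomials of degree at most $d$, each determined by its values at $\theta_0,\dots,\theta_d$. Let $L^*$ be the linear map on $\mathcal P_d(\mathbb R)$ with $(L^*f)(\theta_i)=b^*_i f(\theta_{i+1})+a^*_i f(\theta_i)+c^*_i f(\theta_{i-1})$ ($0\le i\le d$; terms with coefficient $b^*_d$ or $c^*_0$ omitted). Let $u^*_i\in\mathcal P_d(\mathbb R)$ be defined by $u^*_i(\theta_j)=0$ for $j\neq i$ and $u^*_i(\theta_i)=\nu/k^*_i$; these form a basis. A square matrix is irreducible tridiagonal if its nonzero entries lie on the diagonal, subdiagonal or superdiagonal and all subdiagonal and superdiagonal entries are nonzero.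 *)

(* Leonard-system data for the dual Hahn case. *)
From mathcomp Require Import all_boot all_order perm all_algebra.
Set Implicit Arguments. Unset Strict Implicit. Unset Printing Implicit Defensive.
Import Order.TTheory GRing.Theory Num.Theory.
Local Open Scope ring_scope.

Section Defs.
Variable R : realFieldType.
Variables (d : nat) (r s : R).

Definition poch (x : R) (i : nat) : R := \prod_(k < i) (x + k%:R).

Definition theta (i : nat) : R := (d - i)%:R * ((d - i)%:R + r + s + 1).

Definition bstar (i : nat) : R :=
  if (i < d)%N then
    (d - i)%:R * (i%:R - d%:R - s) * poch (2 * (d - i)%:R + r + s + 2) i
    / poch (2 * (d - i)%:R + r + s) i.+1
  else 0.

Definition cstar (i : nat) : R :=
  if (0 < i)%N then
    i%:R * (i%:R - d%:R - r - 1) * poch ((d - i)%:R + r + s + 1) (d - i)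
    / poch ((d - i)%:R + r + s + 2) (d - i).+1
  else 0.

(* theta*_0 = 0 *)
Definition astar (i : nat) : R := 0 - bstar i - cstar i.

Definition kstar (i : nat) : R :=
  (\prod_(l < i) bstar l) / (\prod_(1 <= l < i.+1) cstar l).

Definition cc (i : nat) : R := i%:R * (i%:R + r).

Definition nu : R :=
  (\prod_(1 <= j < d.+1) (theta 0 - theta j)) / (\prod_(1 <= j < d.+1) cc j).

Definition lagr (i : 'I_d.+1) : {poly R} :=
  \prod_(j < d.+1 | j != i) (('X - (theta j)%:P) * ((theta i - theta j)^-1)%:P).

Definition interp (v : nat -> R) : {poly R} :=
  \sum_(i < d.+1) v i *: lagr i.

(* L^* ; the terms with coefficient b*_d or c*_0 vanish since these are 0 *)
Definition Lstar (f : {poly R}) : {poly R} :=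
  interp (fun i => bstar i * f.[theta i.+1] + astar i * f.[theta i]
                   + cstar i * f.[theta i.-1]).

Definition ustar (i : 'I_d.+1) : {poly R} := (nu / kstar i) *: lagr i.

End Defs.
Arguments poch {R}.
Arguments theta {R}.
Arguments bstar {R}.
Arguments cstar {R}.
Arguments astar {R}.
Arguments kstar {R}.
Arguments cc {R}.
Arguments nu {R}.
Arguments lagr {R}.
Arguments interp {R}.
Arguments Lstar {R}.
Arguments ustar {R}.

Definition LstarL2 (R : realFieldType) (d : nat) (r s lam : R) (f : {poly R}) :=
  let g := Lstar d r s f + lam *: f in Lstar d r s g + lam *: g.

Definition represents (R : realFieldType) (n : nat) (T : {poly R} -> {poly R})
  (ub : 'I_n -> {poly R}) (M : 'M[R]_n) : Prop :=
  forall j : 'I_n, T (ub j) = \sum_(i < n) M i j *: ub i.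

Definition irred_tridiag (R : realFieldType) (n : nat) (M : 'M[R]_n) : Prop :=
  (forall i j : 'I_n, (i.+1 < j)%N \/ (j.+1 < i)%N -> M i j = 0) /\
  (forall i j : 'I_n, (i.+1 = j)%N \/ (j.+1 = i)%N -> M i j != 0).

From mathcomp Require Import all_boot all_order perm all_algebra.
Import Order.TTheory GRing.Theory Num.Theory.
From mathcomp Require Import zify ring lra.
Set Implicit Arguments. Unset Strict Implicit. Unset Printing Implicit Defensive.

(* In the basis u*_0, ..., u*_d, a rescaling of the Lagrange basis at theta_0, ..., theta_d,
   L* + lambda acts by the tridiagonal matrix with diagonal a*_k + lambda, superdiagonal b*_k
   and subdiagonal c*_k, none of the b*, c* vanishing for r, s > -1.  Hence the (p, q) entry of
   the square is nonzero off the diagonal exactly when |p - q| = 2, or when q = p +- 1 and the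
   "rung" 2 lambda + a*_k + a*_(k+1), k = min p q, is nonzero.  The reordered matrix is
   irreducible tridiagonal iff this graph is a path and sigma lists its vertices in path
   order.  Degree and parity arguments leave exactly one rung, at 0 or at d - 1 (for d = 3 the
   middle rung is excluded by an identity of the a*_k forcing r = s), and the path is then the
   zigzag 0, 2, 4, ..., 5, 3, 1 or its mirror image. *)

Definition line_adj (i j : nat) : bool := (i == j.+1) || (j == i.+1).

(* Off-diagonal support of the square of a tridiagonal matrix with nonzero off-diagonal
   entries; [E k] says whether the (k, k + 1) and (k + 1, k) entries of the square survive. *)
Definition sq_adj (E : pred nat) (p q : nat) : bool :=
  [|| p == q.+2, q == p.+2, E q && (p == q.+1) | E p && (q == p.+1)].

Definition path_labeling (d : nat) (e : rel nat) (S : nat -> nat) : Prop :=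
  forall i j, i <= d -> j <= d -> e (S i) (S j) = line_adj i j.

(* [zigzag d] lists the path 0 - 2 - 4 - ... - 3 - 1 of [sq_adj (pred1 d.-1)];
   [zigzag_pos d p] is the position of vertex [p] on it. *)
Definition zigzag (d i : nat) : nat := if i <= d./2 then 2 * i else (2 * (d - i)).+1.

Definition zigzag_pos (d p : nat) : nat := if odd p then d - p./2 else p./2.

Lemma sq_adj_irr E : irreflexive (sq_adj E).
Proof. move=> p; rewrite /sq_adj; lia. Qed.

Lemma eq_sq_adj d E E' p q : (forall k, k < d -> E k = E' k) -> p <= d -> q <= d ->
  sq_adj E p q = sq_adj E' p q.
Proof. move=> EE' hp hq; rewrite /sq_adj; have := EE' p; have := EE' q; lia. Qed.

Lemma sq_adj_first_rungE d p q : 0 < d -> p <= d -> q <= d ->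
  sq_adj (pred1 0) p q = sq_adj (pred1 d.-1) (d - p) (d - q).
Proof. rewrite /sq_adj /=; lia. Qed.

Lemma sq_adj_last_rungE d p q : 0 < d -> p <= d -> q <= d ->
  sq_adj (pred1 d.-1) p q = line_adj (zigzag_pos d p) (zigzag_pos d q).
Proof. rewrite /sq_adj /line_adj /zigzag_pos /=; case: ifP; case: ifP; lia. Qed.

Lemma zigzag_pos_le d p : p <= d -> zigzag_pos d p <= d.
Proof. rewrite /zigzag_pos; case: ifP; lia. Qed.

Lemma zigzagK d i : i <= d -> zigzag_pos d (zigzag d i) = i.
Proof. rewrite /zigzag /zigzag_pos; case: ifP; case: ifP; lia. Qed.

Lemma zigzag_posK d p : p <= d -> zigzag d (zigzag_pos d p) = p.
Proof. rewrite /zigzag /zigzag_pos; case: ifP; case: ifP; lia. Qed.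

(* Once a line labeling has moved up by one, injectivity forbids it from turning back. *)
Lemma line_labeling_up d t :
  (forall i, i <= d -> t i <= d) -> (forall i j, i <= d -> j <= d -> t i = t j -> i = j) ->
  path_labeling d line_adj t -> 0 < d -> t 1 = (t 0).+1 -> forall i, i <= d -> t i = i.
Proof.
move=> t_le t_inj tP d_gt0 t01.
have up i : i < d -> t i.+1 = (t i).+1.
  elim: i => [//|i IH hi].
  have := tP i.+1 i.+2 (ltnW hi) hi; have := t_inj i.+2 i hi (ltnW (ltnW hi)).
  rewrite /line_adj IH ?(ltnW hi) //; lia.
have shift i : i <= d -> t i = t 0 + i.
  by elim: i => [|i IH hi]; [rewrite addn0 | rewrite up // IH ?(ltnW hi) // addnS].
move=> i hi; rewrite shift //; have := t_le d (leqnn d); rewrite shift //; lia.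
Qed.

Lemma line_labelings d t :
  (forall i, i <= d -> t i <= d) -> (forall i j, i <= d -> j <= d -> t i = t j -> i = j) ->
  path_labeling d line_adj t <->
  (forall i, i <= d -> t i = i) \/ (forall i, i <= d -> t i = d - i).
Proof.
move=> t_le t_inj; split=> [tP|[tE|tE] i j hi hj]; last 2 first.
- by rewrite !tE.
- by rewrite !tE // /line_adj; lia.
have [d0|d_gt0] := posnP d.
  by left=> i hi; have := t_le i hi; lia.
have := tP 0 1 (leq0n d) d_gt0; rewrite /line_adj => /orP[/eqP t10|/eqP t01]; last first.
  by left; apply: line_labeling_up.
right=> i hi; suff: d - t i = i by have := t_le i hi; lia.
apply: (@line_labeling_up d (fun i => d - t i)) => //.
- by move=> k _; apply: leq_subr.
- by move=> k l hk hl; have := t_le k hk; have := t_le l hl; have := t_inj k l hk hl; lia.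
- move=> k l hk hl; have := tP k l hk hl; have := t_le k hk; have := t_le l hl.
  rewrite /line_adj; lia.
- by have := t_le 0 (leq0n d); lia.
Qed.

Lemma zigzag_posE d p i : p <= d -> i <= d -> (zigzag_pos d p = i) <-> (p = zigzag d i).
Proof. by move=> hp hi; split=> [<-|->]; rewrite ?zigzag_posK ?zigzagK. Qed.

Lemma zigzag_labelings d S : 0 < d -> (forall i, i <= d -> S i <= d) ->
  (forall i j, i <= d -> j <= d -> S i = S j -> i = j) ->
  path_labeling d (sq_adj (pred1 d.-1)) S <->
  (forall i, i <= d -> S i = zigzag d i) \/ (forall i, i <= d -> S i = zigzag d (d - i)).
Proof.
move=> d_gt0 S_le S_inj.
have -> : path_labeling d (sq_adj (pred1 d.-1)) S <->
          path_labeling d line_adj (fun i => zigzag_pos d (S i)).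
  by split=> SP i j hi hj; rewrite -(SP i j hi hj) sq_adj_last_rungE ?S_le.
rewrite line_labelings; last 2 first.
- by move=> i hi; rewrite zigzag_pos_le ?S_le.
- move=> i j hi hj /(congr1 (zigzag d)); rewrite !zigzag_posK ?S_le //; exact: S_inj.
by split=> -[SE|SE]; [left|right|left|right]=> i hi;
  apply/zigzag_posE; rewrite ?S_le ?SE //; lia.
Qed.

Section PathLabelingRungs.
Variables (d : nat) (E : pred nat) (S T : nat -> nat).
Hypotheses (d_gt0 : 0 < d) (S_le : forall i, i <= d -> S i <= d)
  (T_le : forall p, p <= d -> T p <= d) (SK : forall i, i <= d -> T (S i) = i)
  (TK : forall p, p <= d -> S (T p) = p) (SP : path_labeling d (sq_adj E) S).

Lemma sq_adj_pos p q : p <= d -> q <= d -> sq_adj E p q = line_adj (T p) (T q).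
Proof. by move=> hp hq; rewrite -SP ?T_le ?TK. Qed.

Lemma pos_inj p q : p <= d -> q <= d -> T p = T q -> p = q.
Proof. by move=> hp hq e; rewrite -(TK hp) -(TK hq) e. Qed.

Lemma no_three_neighbours p x y z : p <= d -> x <= d -> y <= d -> z <= d ->
  x != y -> y != z -> x != z -> sq_adj E p x -> sq_adj E p y -> sq_adj E p z -> False.
Proof.
move=> hp hx hy hz; rewrite !sq_adj_pos // /line_adj.
by have := pos_inj hx hy; have := pos_inj hy hz; have := pos_inj hx hz; lia.
Qed.

Lemma no_two_neighbours_first x y : x <= d -> y <= d -> x != y ->
  sq_adj E (S 0) x -> sq_adj E (S 0) y -> False.
Proof.
move=> hx hy; rewrite !sq_adj_pos ?S_le // SK // /line_adj.
by have := pos_inj hx hy; lia.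
Qed.

(* Without rungs, [sq_adj E] only links vertices of equal parity, but the path visits both
   0 and 1. *)
Lemma exists_rung : exists2 k, k < d & E k.
Proof.
have [/hasP[k]|/hasPn noE] := boolP (has E (iota 0 d)).
  by rewrite mem_iota => /andP[_ hk] Ek; exists k.
have {}noE k : k < d -> ~~ E k by move=> hk; apply: noE; rewrite mem_iota.
have par i : i <= d -> odd (S i) = odd (S 0).
  elim: i => [//|i IH hi]; rewrite -IH ?(ltnW hi) //.
  have := SP (ltnW hi) hi; have := noE (S i); have := noE (S i.+1).
  by have := S_le hi; have := S_le (ltnW hi); rewrite /sq_adj /line_adj; lia.
have := par _ (T_le (leq0n d)); have := par _ (T_le d_gt0); rewrite !TK //; lia.
Qed.

Lemma rung_ends k : k < d -> E k -> [|| k == 0, k == d.-1 | (d == 3) && (k == 1)].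
Proof.
move=> hk Ek; have [k_ge2|k_le1] := leqP 2 k.
  have [kd|] := leqP k.+2 d; last lia.
  by case: (@no_three_neighbours k (k - 2) k.+2 k.+1); rewrite /sq_adj ?Ek; lia.
have [kd|] := leqP k.+3 d; last lia.
have [k0|k_gt0] := posnP k; first by rewrite k0.
by case: (@no_three_neighbours k.+1 k.-1 k.+3 k); rewrite /sq_adj ?Ek; lia.
Qed.

(* With rungs at both ends every vertex, in particular the first one [S 0], has two neighbours. *)
Lemma no_two_end_rungs : 1 < d -> E 0 -> E d.-1 -> False.
Proof.
move=> d_gt1 E0 Ed; have hp := S_le (leq0n d).
have [p_le1|p_ge2] := leqP (S 0) 1.
  have [e|e] : S 0 = 0 \/ S 0 = 1 by lia.
    by apply: (@no_two_neighbours_first 1 2); rewrite ?e /sq_adj ?E0; lia.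
  have [d_ge3|d_le2] := leqP 3 d.
    by apply: (@no_two_neighbours_first 0 3); rewrite ?e /sq_adj ?E0; lia.
  have E1 : E 1 by move: Ed; have -> : d = 2 by lia.
  by apply: (@no_two_neighbours_first 0 2); rewrite ?e /sq_adj ?E0 ?E1; lia.
have [p_mid|p_gt] := leqP (S 0) (d - 2).
  by apply: (@no_two_neighbours_first (S 0 - 2) (S 0).+2); rewrite /sq_adj; lia.
have [e|e] : S 0 = d.-1 \/ S 0 = d by lia.
  by apply: (@no_two_neighbours_first d (d - 3)); rewrite ?e /sq_adj ?Ed; lia.
by apply: (@no_two_neighbours_first (d - 2) d.-1); rewrite ?e /sq_adj ?Ed; lia.
Qed.

(* For [d = 3] a single middle rung would give the path 0 - 2 - 1 - 3, so it must be excluded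
   by hypothesis. *)
Lemma labeling_rungs : (d = 3 -> ~~ E 0 -> ~~ E 2 -> ~~ E 1) ->
  (forall k, k < d -> E k = (k == d.-1)) \/ (forall k, k < d -> E k = (k == 0)).
Proof.
move=> no_middle_rung.
have ends k : k < d -> E k -> k = 0 \/ k = d.-1.
  move=> hk Ek; case/or3P: (rung_ends hk Ek) => [/eqP|/eqP|/andP[/eqP d3 /eqP k1]]; auto.
  exfalso; subst k; have [E0|nE0] := boolP (E 0).
    by apply: (@no_three_neighbours 1 0 2 3); rewrite /sq_adj ?E0 ?Ek; lia.
  have [E2|nE2] := boolP (E 2).
    by apply: (@no_three_neighbours 2 0 1 3); rewrite /sq_adj ?E2 ?Ek; lia.
  by move: Ek; rewrite (negbTE (no_middle_rung d3 nE0 nE2)).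
have [k hk Ek] := exists_rung.
have [E0|nE0] := boolP (E 0).
  right=> j hj; apply/idP/eqP => [Ej|->//]; case: (ends j hj Ej) => // jd.
  have [d_le1|d_gt1] := leqP d 1; first lia.
  by case: (no_two_end_rungs d_gt1 E0); rewrite -jd.
left=> j hj; apply/idP/eqP => [Ej|->].
  by case: (ends j hj Ej) => // j0; rewrite -j0 Ej in nE0.
by case: (ends k hk Ek) => [k0|<-]; first by rewrite -k0 Ek in nE0.
Qed.

End PathLabelingRungs.

Lemma sq_adj_labelings d E S T : 0 < d -> (forall i, i <= d -> S i <= d) ->
  (forall p, p <= d -> T p <= d) -> (forall i, i <= d -> T (S i) = i) ->
  (forall p, p <= d -> S (T p) = p) -> (d = 3 -> ~~ E 0 -> ~~ E 2 -> ~~ E 1) ->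
  path_labeling d (sq_adj E) S <->
  (forall k, k < d -> E k = (k == d.-1)) /\
    ((forall i, i <= d -> S i = zigzag d i) \/ (forall i, i <= d -> S i = zigzag d (d - i)))
  \/ (forall k, k < d -> E k = (k == 0)) /\
    ((forall i, i <= d -> d - S i = zigzag d i) \/
     (forall i, i <= d -> d - S i = zigzag d (d - i))).
Proof.
move=> d_gt0 S_le T_le SK TK no_middle_rung.
have S_inj i j : i <= d -> j <= d -> S i = S j -> i = j.
  by move=> hi hj e; rewrite -(SK i hi) -(SK j hj) e.
have last_rung : (forall k, k < d -> E k = (k == d.-1)) ->
    path_labeling d (sq_adj E) S <-> path_labeling d (sq_adj (pred1 d.-1)) S.
  by move=> HE; split=> SP i j hi hj; rewrite -(SP i j hi hj) (@eq_sq_adj d E (pred1 d.-1)) ?S_le.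
have first_rung : (forall k, k < d -> E k = (k == 0)) ->
    path_labeling d (sq_adj E) S <-> path_labeling d (sq_adj (pred1 d.-1)) (fun i => d - S i).
  move=> HE; split=> SP i j hi hj; rewrite -(SP i j hi hj) -sq_adj_first_rungE ?S_le //;
    by rewrite (@eq_sq_adj d E (pred1 0)) ?S_le.
have rev_inj i j : i <= d -> j <= d -> d - S i = d - S j -> i = j.
  by move=> hi hj e; apply: S_inj => //; have := S_le i hi; have := S_le j hj; lia.
split=> [SP|[[HE HS]|[HE HS]]].
- have [HE|HE] := labeling_rungs d_gt0 S_le T_le SK TK SP no_middle_rung; [left|right]; split=> //.
    by rewrite -zigzag_labelings // -last_rung.
  by rewrite -zigzag_labelings // => [|i hi]; [rewrite -first_rung | apply: leq_subr].
- by rewrite last_rung // zigzag_labelings.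
- by rewrite first_rung // zigzag_labelings // => i hi; apply: leq_subr.
Qed.

Local Open Scope ring_scope.

Section TridiagonalSquare.
Variables (R : idomainType) (b a c : nat -> R) (lam : R).

Definition tridiag_act (v : nat -> R) (k : nat) : R :=
  b k * v k.+1 + (a k + lam) * v k + c k * v k.-1.

Definition tridiag_sq_entry (p q : nat) : R :=
  tridiag_act (tridiag_act (fun m => (m == q)%:R)) p.

Lemma tridiag_actZ x v k : tridiag_act (fun m => x * v m) k = x * tridiag_act v k.
Proof. rewrite /tridiag_act; ring. Qed.

Lemma tridiag_act_eq_on d v v' k : b d = 0 -> (forall m, (m <= d)%N -> v m = v' m) ->
  (k <= d)%N -> tridiag_act v k = tridiag_act v' k.
Proof.
move=> bd vv' hk; rewrite /tridiag_act (vv' k) // (vv' k.-1) ?(leq_trans (leq_pred k)) //.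
have [kd|dk] := ltnP k d; first by rewrite vv'.
suff -> : k = d by rewrite bd !mul0r.
lia.
Qed.

Local Ltac eval_deltas :=
  rewrite /tridiag_sq_entry /tridiag_act;
  repeat match goal with
  | |- context [ (?x == ?y)%N ] =>
      first [ have -> : (x == y)%N = true by apply/eqP; lia
            | have -> : (x == y)%N = false by apply/negbTE/eqP; lia ]
  end; rewrite /=.

Lemma tridiag_sq_entry_far p q : (q.+2 < p \/ p.+2 < q)%N -> tridiag_sq_entry p q = 0.
Proof. by move=> far; eval_deltas; ring. Qed.

Lemma tridiag_sq_entry_up2 p : tridiag_sq_entry p p.+2 = b p * b p.+1.
Proof. by eval_deltas; ring. Qed.

Lemma tridiag_sq_entry_down2 q : tridiag_sq_entry q.+2 q = c q.+2 * c q.+1.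
Proof. by eval_deltas; ring. Qed.

(* [k.-1] truncates at 0, so row 0 only behaves as expected if [c 0 = 0]. *)
Hypothesis c0 : c 0 = 0.

Lemma tridiag_sq_entry_up1 p : tridiag_sq_entry p p.+1 = b p * (2 * lam + a p + a p.+1).
Proof. by case: p => [|p]; eval_deltas; rewrite ?c0; ring. Qed.

Lemma tridiag_sq_entry_down1 q : tridiag_sq_entry q.+1 q = c q.+1 * (2 * lam + a q + a q.+1).
Proof. by case: q => [|q]; eval_deltas; rewrite ?c0; ring. Qed.

Lemma tridiag_sq_entry_neq0 d p q :
  (forall k, (k < d)%N -> b k != 0) -> (forall k, (0 < k <= d)%N -> c k != 0) ->
  (p <= d)%N -> (q <= d)%N -> p != q ->
  (tridiag_sq_entry p q != 0) = sq_adj (fun k => 2 * lam + a k + a k.+1 != 0) p q.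
Proof.
move=> bP cP hp hq pq; set E := fun k => _; rewrite /sq_adj.
have [e|] := eqVneq q p.+2; first by rewrite e tridiag_sq_entry_up2 mulf_neq0 ?bP //; lia.
have [e|] := eqVneq p q.+2; first by rewrite e tridiag_sq_entry_down2 mulf_neq0 ?cP //; lia.
have [e|] := eqVneq q p.+1.
  by rewrite e tridiag_sq_entry_up1 mulf_eq0 negb_or bP // -/(E p); lia.
have [e|] := eqVneq p q.+1.
  by rewrite e tridiag_sq_entry_down1 mulf_eq0 negb_or cP // -/(E q); lia.
by move=> *; rewrite tridiag_sq_entry_far ?eqxx //; lia.
Qed.

End TridiagonalSquare.

Lemma irred_tridiagE (R : realFieldType) n (M : 'M[R]_n) :
  irred_tridiag M <-> forall i j, i != j -> (M i j != 0) = line_adj i j.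
Proof.
split=> [[far near] i j ij|MP].
  have [adj|nadj] := boolP (line_adj i j).
    by apply: near; move: adj; rewrite /line_adj; lia.
  have ij' : (i : nat) != j := ij.
  by rewrite far ?eqxx //; move: nadj; rewrite /line_adj; lia.
split=> i j h; have ij : (i : nat) != j by lia.
  by apply/eqP; rewrite -[_ == 0]negbK MP // /line_adj; lia.
by rewrite MP // /line_adj; lia.
Qed.

Lemma irred_tridiag_labeling (R : realFieldType) d (sigma : {perm 'I_d.+1}) (M : 'M[R]_d.+1)
    (e : rel nat) : irreflexive e -> (forall i j, i != j -> (M i j != 0) = e (sigma i) (sigma j)) ->
  irred_tridiag M <-> path_labeling d e (fun i => sigma (inord i)).
Proof.
move=> e_irr Me; rewrite irred_tridiagE; split=> [MP i j hi hj|P i j ij].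
  have [<-|ij] := eqVneq i j; first by rewrite e_irr /line_adj; lia.
  have ij' : inord i != inord j :> 'I_d.+1 by rewrite -val_eqE /= !inordK.
  by rewrite -Me // MP // !inordK.
by rewrite Me // -(P i j (leq_ord i) (leq_ord j)) !inord_val.
Qed.

Lemma poch_gt0 (R : realFieldType) (x : R) n : 0 < x -> 0 < poch x n.
Proof. by move=> x_gt0; apply: prodr_gt0 => k _; have := ler0n R k; lra. Qed.

Section DualHahn.
Variables (R : realFieldType) (d : nat) (r s : R).
(* [lra] does not look at section hypotheses; proofs needing it first [move: r_gt s_gt]. *)
Hypotheses (r_gt : -1 < r) (s_gt : -1 < s).

Local Notation th := (theta d r s).
Local Notation b := (bstar d r s).
Local Notation a := (astar d r s).
Local Notation c := (cstar d r s).
Local Notation lagr := (lagr d r s).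
Local Notation ustar := (ustar d r s).
Local Notation weight i := (nu d r s / kstar d r s i).

Lemma bstar_neq0 k : (k < d)%N -> b k != 0.
Proof.
move: r_gt s_gt => hr hs hk; rewrite /bstar hk.
have h1 : 1 <= (d - k)%:R :> R by rewrite ler1n; lia.
have h2 : k%:R + 1 <= d%:R :> R by rewrite natr1 ler_nat.
have p1 := @poch_gt0 R (2 * (d - k)%:R + r + s + 2) k ltac:(lra).
have p2 := @poch_gt0 R (2 * (d - k)%:R + r + s) k.+1 ltac:(lra).
by rewrite !mulf_neq0 ?invr_neq0 //; apply/eqP; lra.
Qed.

Lemma cstar_neq0 k : (0 < k <= d)%N -> c k != 0.
Proof.
move: r_gt s_gt => hr hs /andP[k_gt0 hk]; rewrite /cstar k_gt0.
have h1 : 1 <= k%:R :> R by rewrite ler1n.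
have h2 : k%:R <= d%:R :> R by rewrite ler_nat.
have h3 : 0 <= (d - k)%:R :> R by exact: ler0n.
have p1 : 0 < poch ((d - k)%:R + r + s + 1) (d - k).
  case: (d - k)%N => [|n]; first by rewrite /poch big_ord0 ltr01.
  by apply: poch_gt0; have := ler0n R n; rewrite -natr1; lra.
have p2 := @poch_gt0 R ((d - k)%:R + r + s + 2) (d - k).+1 ltac:(lra).
by rewrite !mulf_neq0 ?invr_neq0 //; apply/eqP; lra.
Qed.

Lemma theta_inj i j : (i <= d)%N -> (j <= d)%N -> th i = th j -> i = j.
Proof.
move: r_gt s_gt => hr hs hi hj thij; apply/eqP; apply: contraT => ij.
have ne : (d - i)%N != (d - j)%N by lia.
have sum_ge1 : 1 <= (d - i)%:R + (d - j)%:R :> R by rewrite -natrD ler1n; lia.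
have : th i - th j = ((d - i)%:R - (d - j)%:R) * ((d - i)%:R + (d - j)%:R + r + s + 1).
  by rewrite /theta; ring.
rewrite thij subrr => /esym/eqP; rewrite mulf_eq0 subr_eq0 eqr_nat (negbTE ne) /=.
by move/eqP; lra.
Qed.

Lemma lagr_eval (i : 'I_d.+1) k : (k <= d)%N -> (lagr i).[th k] = (i == k :> nat)%:R.
Proof.
move=> hk; rewrite /lagr horner_prod.
have [<-|ik] := eqVneq (i : nat) k.
  apply: big1 => j ji; rewrite hornerM hornerXsubC hornerC divff // subr_eq0.
  by apply: contra ji => /eqP/(theta_inj (ltn_ord i) (ltn_ord j)) ij; apply/eqP/val_inj.
rewrite (bigD1 (inord k)) /=; last by rewrite -val_eqE /= inordK // eq_sym.
by rewrite hornerM hornerXsubC hornerC inordK // subrr !mul0r.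
Qed.

Lemma size_lagr i : (size (lagr i) <= d.+1)%N.
Proof.
rewrite /lagr (leq_trans (size_poly_prod_leq _ _)) // cardC1 card_ord.
set sizes := (X in (X.+1 - _ <= _)%N); suff : (sizes <= 2 * d)%N by lia.
have sizeF (j : 'I_d.+1) : (size (('X - (th j)%:P) * ((th i - th j)^-1)%:P)%R <= 2)%N.
  by rewrite (leq_trans (size_polyMleq _ _)) // size_XsubC size_polyC; case: (_ != 0).
by rewrite (leq_trans (leq_sum _ (fun j _ => sizeF j))) // sum_nat_const cardC1 card_ord mulnC.
Qed.

Lemma interp_eval v k : (k <= d)%N -> (interp d r s v).[th k] = v k.
Proof.
move=> hk; rewrite horner_sum (bigD1 (inord k)) //= hornerZ lagr_eval // inordK // eqxx mulr1.
rewrite big1 ?addr0 // => i ik; rewrite hornerZ lagr_eval // (_ : _ == _ = false) ?mulr0 //.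
by apply: contraNF ik => /eqP ik; apply/eqP/val_inj; rewrite /= inordK.
Qed.

Lemma size_interp v : (size (interp d r s v) <= d.+1)%N.
Proof.
rewrite (leq_trans (size_sum _ _ _)) //; apply/bigmax_leqP => i _.
exact: leq_trans (size_scale_leq _ _) (size_lagr i).
Qed.

Lemma poly_eq_on_theta (p q : {poly R}) : (size p <= d.+1)%N -> (size q <= d.+1)%N ->
  (forall k, (k <= d)%N -> p.[th k] = q.[th k]) -> p = q.
Proof.
move=> sp sq pq; apply/eqP; rewrite -subr_eq0; apply: contraT => nz.
have size_pq : (size (p - q)%R <= d.+1)%N.
  by rewrite (leq_trans (size_polyD _ _)) // size_polyN geq_max sp sq.
suff : (size (mkseq th d.+1) < size (p - q)%R)%N by rewrite size_mkseq ltnNge size_pq.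
apply: max_poly_roots nz _ _.
  apply/allP => x /mapP[k]; rewrite mem_iota => /andP[_ hk] ->.
  by rewrite /root hornerD hornerN pq ?subrr.
apply/(uniqP 0) => i j; rewrite !inE size_mkseq => hi hj.
by rewrite !nth_mkseq //; apply: theta_inj.
Qed.

Lemma kstar_neq0 k : (k <= d)%N -> kstar d r s k != 0.
Proof.
move=> hk; rewrite /kstar mulf_neq0 ?invr_neq0 //.
  by apply/prodf_neq0 => l _; apply: bstar_neq0; apply: leq_trans hk.
rewrite prodf_seq_neq0; apply/allP => l; rewrite mem_index_iota => hl.
by apply/implyP => _; apply: cstar_neq0; lia.
Qed.

Lemma nu_neq0 : nu d r s != 0.
Proof.
move: r_gt => hr; rewrite /nu mulf_neq0 ?invr_neq0 // prodf_seq_neq0; apply/allP => j;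
  rewrite mem_index_iota => hj; apply/implyP => _.
  by rewrite subr_eq0; apply/eqP => /theta_inj; lia.
have j_ge1 : 1 <= j%:R :> R by rewrite ler1n; lia.
by rewrite /cc mulf_neq0 //; apply/eqP; lra.
Qed.

Lemma weight_neq0 k : (k <= d)%N -> weight k != 0.
Proof. by move=> hk; rewrite mulf_neq0 ?invr_neq0 ?nu_neq0 ?kstar_neq0. Qed.

Lemma ustar_eval (i : 'I_d.+1) k : (k <= d)%N -> (ustar i).[th k] = weight i * (i == k :> nat)%:R.
Proof. by move=> hk; rewrite hornerZ lagr_eval. Qed.

Lemma Lstar_shift_eval lam f k : (k <= d)%N ->
  (Lstar d r s f + lam *: f).[th k] = tridiag_act b a c lam (fun m => f.[th m]) k.
Proof. by move=> hk; rewrite hornerD hornerZ interp_eval // /tridiag_act; ring. Qed.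

Lemma LstarL2_eval lam f k : (k <= d)%N ->
  (LstarL2 d r s lam f).[th k] =
  tridiag_act b a c lam (tridiag_act b a c lam (fun m => f.[th m])) k.
Proof.
move=> hk; rewrite Lstar_shift_eval //; apply: tridiag_act_eq_on hk.
  by rewrite /bstar ltnn.
by move=> m hm; rewrite Lstar_shift_eval.
Qed.

Lemma LstarL2_ustar_eval lam (q : 'I_d.+1) p : (p <= d)%N ->
  (LstarL2 d r s lam (ustar q)).[th p] = weight q * tridiag_sq_entry b a c lam p q.
Proof.
have bd : b d = 0 by rewrite /bstar ltnn.
move=> hp; rewrite LstarL2_eval // /tridiag_sq_entry -tridiag_actZ.
apply: tridiag_act_eq_on hp => // m hm; rewrite -tridiag_actZ.
by apply: tridiag_act_eq_on hm => // l hl; rewrite ustar_eval // eq_sym.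
Qed.

Section Reordered.
Variables (lam : R) (sigma : {perm 'I_d.+1}).
Local Notation ubar i := (ustar (sigma i)).
Local Notation entry i j := (tridiag_sq_entry b a c lam (sigma i) (sigma j)).

Lemma sum_ubar_eval (x : 'I_d.+1 -> R) i :
  (\sum_k x k *: ubar k).[th (sigma i)] = x i * weight (sigma i).
Proof.
rewrite horner_sum (bigD1 i) //= hornerZ ustar_eval ?leq_ord // eqxx mulr1 big1 ?addr0 // => k ki.
by rewrite hornerZ ustar_eval ?leq_ord // (inj_eq val_inj) (inj_eq perm_inj) (negbTE ki) !mulr0.
Qed.

Lemma represents_entry M : represents (LstarL2 d r s lam) (fun i => ubar i) M ->
  forall i j, M i j = weight (sigma j) / weight (sigma i) * entry i j.
Proof.
move=> repM i j; have wi := weight_neq0 (leq_ord (sigma i)).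
apply: (mulIf wi); rewrite -(sum_ubar_eval (fun k => M k j)) -repM LstarL2_ustar_eval ?leq_ord //.
by field; rewrite nu_neq0 !kstar_neq0 ?leq_ord.
Qed.

Lemma represents_exists :
  represents (LstarL2 d r s lam) (fun i => ubar i)
    (\matrix_(i, j) (weight (sigma j) / weight (sigma i) * entry i j)).
Proof.
move=> j; apply: poly_eq_on_theta => [||k hk].
- rewrite /LstarL2 /= (leq_trans (size_polyD _ _)) // geq_max size_interp.
  by rewrite (leq_trans (size_scale_leq _ _)) // (leq_trans (size_polyD _ _)) // geq_max
    size_interp (leq_trans (size_scale_leq _ _)) // (leq_trans (size_scale_leq _ _)) ?size_lagr.
- rewrite (leq_trans (size_sum _ _ _)) //; apply/bigmax_leqP => i _.
  by rewrite !(leq_trans (size_scale_leq _ _)) ?size_lagr.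
have [i ->] : exists i, k = sigma i by exists (sigma^-1 (inord k))%g; rewrite permKV inordK.
rewrite sum_ubar_eval LstarL2_ustar_eval ?leq_ord // mxE.
by field; rewrite nu_neq0 !kstar_neq0 ?leq_ord.
Qed.

Lemma represents_neq0 M : represents (LstarL2 d r s lam) (fun i => ubar i) M ->
  forall i j, i != j -> (M i j != 0) =
    sq_adj (fun k => 2 * lam + a k + a k.+1 != 0) (sigma i) (sigma j).
Proof.
move=> repM i j ij.
rewrite (represents_entry repM) mulf_eq0 negb_or mulf_neq0 ?invr_neq0 ?weight_neq0 ?leq_ord //=.
apply: (@tridiag_sq_entry_neq0 _ _ _ _ _ _ d); rewrite ?leq_ord //.
- exact: bstar_neq0.
- exact: cstar_neq0.
- by rewrite (inj_eq val_inj) (inj_eq perm_inj).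
Qed.

End Reordered.

End DualHahn.

Lemma astar3_middle_rung (R : realFieldType) (r s lam : R) : -1 < r -> -1 < s ->
  let a := astar 3 r s in
  2 * lam + a 0%N + a 1%N = 0 -> 2 * lam + a 2%N + a 3%N = 0 -> 2 * lam + a 1%N + a 2%N = 0.
Proof.
move=> hr hs a rung01 rung23.
set K := (3 / (r + s + 6) + (r + s + 12) / ((r + s + 4) * (r + s + 6)) + 4 / (r + s + 4)) / 2.
have a_expand : a 0%N + a 1%N - a 2%N - a 3%N = (s - r) * K.
  rewrite /K /a /astar /bstar /cstar /poch /= !big_ord_recr !big_ord0 /=.
  rewrite (_ : (3 - 0)%N = 3) // (_ : (3 - 1)%N = 2) // (_ : (3 - 2)%N = 1) //.
  rewrite (_ : (3 - 3)%N = 0) //.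
  (* [field] states its side conditions with [GRing.natmul] numerals, unreadable by [lra]. *)
  by field; apply/and5P; split; apply/eqP; rewrite /GRing.natmul /=; lra.
have K_gt0 : 0 < K.
  have [rs4 rs6] : 0 < r + s + 4 /\ 0 < r + s + 6 by split; lra.
  by rewrite /K divr_gt0 // !addr_gt0 ?divr_gt0 ?mulr_gt0 //; lra.
have sr : s = r.
  have : (s - r) * K = 0 by rewrite -a_expand; lra.
  by move/eqP; rewrite mulf_eq0 (gt_eqF K_gt0) orbF subr_eq0 => /eqP.
have a02 : a 0%N = a 2%N.
  rewrite /a /astar /bstar /cstar /poch /= !big_ord_recr !big_ord0 /= sr.
  rewrite (_ : (3 - 0)%N = 3) // (_ : (3 - 2)%N = 1) //.
  by field; apply/and4P; split; apply/eqP; rewrite /GRing.natmul /=; lra.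
by rewrite -a02 addrAC.
Qed.

Section RungConditions.
Variables (R : idomainType) (a : nat -> R) (lam : R) (d : nat).
Hypothesis d_gt0 : (0 < d)%N.
Local Notation rung k := (2 * lam + a k + a k.+1 != 0).

Lemma only_last_rungE :
  (forall k, (k < d)%N -> rung k = (k == d.-1)) <->
  2 * lam + a d.-1 + a d != 0 /\ (forall i, (i.+2 <= d)%N -> 2 * lam + a i + a i.+1 = 0).
Proof.
split=> [E|[Ed E] k kd].
  split; first by rewrite -{2}(prednK d_gt0) E ?eqxx // prednK.
  by move=> i hi; apply/eqP; rewrite -[_ == 0]negbK E //; lia.
have [->|kd'] := eqVneq k d.-1; first by rewrite prednK.
by apply/negbTE; rewrite negbK; apply/eqP/E; lia.
Qed.

Lemma only_first_rungE :
  (forall k, (k < d)%N -> rung k = (k == 0%N)) <->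
  2 * lam + a 0%N + a 1%N != 0 /\ (forall i, (1 <= i)%N -> (i < d)%N -> 2 * lam + a i + a i.+1 = 0).
Proof.
split=> [E|[E0 E] k kd].
  split; first by rewrite E.
  by move=> i i_gt0 hi; apply/eqP; rewrite -[_ == 0]negbK E //; lia.
have [->//|k_gt0] := posnP k.
by apply/negbTE; rewrite negbK; apply/eqP/E; lia.
Qed.

End RungConditions.

Section ZigzagPermutations.
Variables (d : nat) (sigma : {perm 'I_d.+1}).
Hypothesis d_gt0 : (0 < d)%N.
Local Notation S i := (sigma (inord i) : nat).

Local Ltac zigzag_cases :=
  rewrite /zigzag; split=> [E|[E1 E2] i hi];
  [ split=> i hi; have := E i (leq_ord i); have := leq_ord i; have := leq_ord (sigma i);
    rewrite inord_val
  | have := E1 (inord i); have := E2 (inord i); have := leq_ord (sigma (inord i));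
    rewrite inordK // ]; case: ifP; lia.

Lemma zigzag_permE :
  (forall i, (i <= d)%N -> S i = zigzag d i) <->
  (forall i : 'I_d.+1, (i <= d./2)%N -> sigma i = (2 * i)%N :> nat) /\
  (forall i : 'I_d.+1, (d./2 < i)%N -> sigma i = (2 * (d - i)).+1 :> nat).
Proof. by zigzag_cases. Qed.

Lemma zigzag_rev_permE :
  (forall i, (i <= d)%N -> S i = zigzag d (d - i)) <->
  (forall i : 'I_d.+1, (i <= (uphalf d).-1)%N -> sigma i = (2 * i).+1 :> nat) /\
  (forall i : 'I_d.+1, (uphalf d <= i)%N -> sigma i = (2 * (d - i))%N :> nat).
Proof. by zigzag_cases. Qed.

Lemma zigzag_compl_permE :
  (forall i, (i <= d)%N -> (d - S i)%N = zigzag d i) <->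
  (forall i : 'I_d.+1, (i <= d./2)%N -> sigma i = (d - 2 * i)%N :> nat) /\
  (forall i : 'I_d.+1, (d./2 < i)%N -> sigma i = (2 * i - d).-1 :> nat).
Proof. by zigzag_cases. Qed.

Lemma zigzag_compl_rev_permE :
  (forall i, (i <= d)%N -> (d - S i)%N = zigzag d (d - i)) <->
  (forall i : 'I_d.+1, (i <= (uphalf d).-1)%N -> sigma i = (d - 2 * i).-1 :> nat) /\
  (forall i : 'I_d.+1, (uphalf d <= i)%N -> sigma i = (2 * i - d)%N :> nat).
Proof. by zigzag_cases. Qed.

End ZigzagPermutations.

Theorem proposition2p5 (R : realFieldType) (d : nat) (r s lam : R)
  (sigma : {perm 'I_d.+1}) :
  (1 <= d)%N -> -1 < r -> -1 < s ->
  let ubar := fun i : 'I_d.+1 => ustar d r s (sigma i) in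
  let a := astar d r s in
  (exists M : 'M[R]_d.+1, represents (LstarL2 d r s lam) ubar M) /\
  (forall M : 'M[R]_d.+1, represents (LstarL2 d r s lam) ubar M ->
    (irred_tridiag M <->
      ((2 * lam + a d.-1 + a d != 0 /\
        (forall i : nat, (i.+2 <= d)%N -> 2 * lam + a i + a i.+1 = 0) /\
        ((forall i : 'I_d.+1, (i <= d./2)%N -> sigma i = (2 * i)%N :> nat) /\
         (forall i : 'I_d.+1, (d./2 < i)%N -> sigma i = (2 * (d - i)).+1 :> nat)
         \/
         (forall i : 'I_d.+1, (i <= (uphalf d).-1)%N -> sigma i = (2 * i).+1 :> nat) /\
         (forall i : 'I_d.+1, (uphalf d <= i)%N -> sigma i = (2 * (d - i))%N :> nat)))
      \/
      (2 * lam + a 0%N + a 1%N != 0 /\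
        (forall i : nat, (1 <= i)%N -> (i < d)%N -> 2 * lam + a i + a i.+1 = 0) /\
        ((forall i : 'I_d.+1, (i <= d./2)%N -> sigma i = (d - 2 * i)%N :> nat) /\
         (forall i : 'I_d.+1, (d./2 < i)%N -> sigma i = (2 * i - d).-1 :> nat)
         \/
         (forall i : 'I_d.+1, (i <= (uphalf d).-1)%N -> sigma i = (d - 2 * i).-1 :> nat) /\
         (forall i : 'I_d.+1, (uphalf d <= i)%N -> sigma i = (2 * i - d)%N :> nat)))))).
Proof.
move=> d_gt0 r_gt s_gt ubar a; split; first by eexists; exact: represents_exists.
move=> M repM; set E := fun k => 2 * lam + a k + a k.+1 != 0.
rewrite (irred_tridiag_labeling (sq_adj_irr E) (represents_neq0 r_gt s_gt repM)).
rewrite (@sq_adj_labelings _ _ _ (fun p => (sigma^-1)%g (inord p))) //=.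
- rewrite only_last_rungE // only_first_rungE // zigzag_permE // zigzag_rev_permE //.
  by rewrite zigzag_compl_permE // zigzag_compl_rev_permE // -!and_assoc.
- by move=> i _; apply: leq_ord.
- by move=> p _; apply: leq_ord.
- by move=> i hi; rewrite inord_val permK inordK.
- by move=> p hp; rewrite inord_val permKV inordK.
move=> d3; subst d; rewrite /E !negbK => /eqP rung01 /eqP rung23.
exact/eqP/astar3_middle_rung.
Qed.
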